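(* Let $n\geq 3$ be an integer and put $m=2^{n-1}$. Let $G_2(n)=\{0,1,\dots,2^n-1\}$ be the gyrogroup with operation $\oplus$ and gyroautomorphisms $\mathrm{gyr}$ defined in the context below. Then $G_2(n)$ is gyrocommutative, i.e. $a\oplus b=\mathrm{gyr}[a,b](b\oplus a)$ for all $a,b\in G_2(n)$.
   Context: Setup: $n\ge 3$, $m=2^{n-1}$, $G_2(n)=\{0,1,\dots,2^n-1\}$, $P(n)=\{0,\dots,m-1\}$, $H(n)=\{m,\dots,2^n-1\}$; $O_P,E_P$ are the odd/even elements of $P(n)$, $O_H,E_H$ the odd/even elements of $H(n)$. For $i,j\in G_2(n)$ let $t,s\in P(n)$ with $t\equiv i+j\pmod m$, $s\equiv i+j+\frac m2\pmod m$, and set $i\oplus j=t$ if $(i,j)\in (P(n)\times P(n))\cup\big[(H(n)\times H(n))\setminus(E_H\times O_H)\big]$; $i\oplus j=t+m$ if $(i,j)\in (P(n)\times H(n))\cup\big[(H(n)\times P(n))\setminus(E_H\times O_P)\big]$; $i\oplus j=s$ if $(i,j)\in E_H\times O_H$; $i\oplus j=s+m$ if $(i,j)\in E_H\times O_P$. Let $A\colon G_2(n)\to G_2(n)$ be $A(i)=r$ if $i\in O_P$, $A(i)=r+m$ if $i\in O_H$, $A(i)=i$ otherwise, where $r\in P(n)$, $r\equiv i+\frac m2\pmod m$. Let $M=[O_P\times(O_H\cup E_H)]\cup[O_H\times(O_P\cup E_H)]\cup[E_H\times(O_P\cup O_H)]$, and define $\mathrm{gyr}[a,b]=A$ if $(a,b)\in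 M$ and $\mathrm{gyr}[a,b]=I$ (identity map) otherwise. With these, $(G_2(n),\oplus)$ is a gyrogroup (identity $0$, $a\oplus(b\oplus c)=(a\oplus b)\oplus\mathrm{gyr}[a,b](c)$, $\mathrm{gyr}[a,b]=\mathrm{gyr}[a\oplus b,b]$, each $\mathrm{gyr}[a,b]$ an automorphism). *)

From mathcomp Require Import all_boot.
Set Implicit Arguments. Unset Strict Implicit. Unset Printing Implicit Defensive.

Section G2.
Variable n : nat.

Definition mG := 2 ^ n.-1.
Definition inG (i : nat) := i < 2 ^ n.
Definition inP (i : nat) := i < mG.
Definition inH (i : nat) := (mG <= i) && (i < 2 ^ n).
Definition inOP i := inP i && odd i.
Definition inEP i := inP i && ~~ odd i.
Definition inOH i := inH i && odd i.
Definition inEH i := inH i && ~~ odd i.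

Definition gop (i j : nat) : nat :=
  let t := (i + j) %% mG in
  let s := (i + j + mG %/ 2) %% mG in
  if inEH i && inOH j then s
  else if inEH i && inOP j then s + mG
  else if (inP i && inP j) || (inH i && inH j) then t
  else t + mG.

Definition Amap (i : nat) : nat :=
  let r := (i + mG %/ 2) %% mG in
  if inOP i then r else if inOH i then r + mG else i.

Definition inM (a b : nat) : bool :=
  [|| inOP a && (inOH b || inEH b),
      inOH a && (inOP b || inEH b) |
      inEH a && (inOP b || inOH b)].

Definition gyr (a b : nat) : nat -> nat :=
  if inM a b then Amap else id.

End G2.

From mathcomp Require Import all_boot.

(* Write an element of G_2(n) as [r mod m + b m], where the bit b records
   membership in H.  Then [a (+) b] is the element with bit
   [(a \in H) (+) (b \in H)] and residue [a + b], possibly rotated by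
   h = m/2 inside its half; the rotation happens exactly when a is in E_H
   and b is odd, and A is this same rotation applied to the odd elements.
   Since h + h = m the rotation is an involution, and since h is even
   (this is where n >= 3 is used) it preserves parity.  Both sides of the
   gyrocommutative law are therefore the sum [a + b] rotated a certain
   number of times, and comparing these numbers modulo 2 is a finite
   Boolean check on the parities and halves of a and b. *)

Lemma ltn_mod_mG n r : r %% mG n < mG n.
Proof. by rewrite ltn_pmod ?expn_gt0. Qed.

Lemma expn_mG n : 0 < n -> 2 ^ n = mG n + mG n.
Proof. by move=> n_gt0; rewrite /mG addnn -mul2n -expnS prednK. Qed.

Lemma mG_halfE n : 1 < n -> mG n %/ 2 = 2 ^ n.-2.
Proof. by case: n => [|[|k]] // _; rewrite /mG expnS mulKn. Qed.

Lemma addn_mG_half n : 1 < n -> mG n %/ 2 + mG n %/ 2 = mG n.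
Proof.
by move=> n_gt1; rewrite mG_halfE // addnn -mul2n -expnS /mG; case: n n_gt1 => [|[|k]].
Qed.

Lemma odd_mG_half n : 2 < n -> odd (mG n %/ 2) = false.
Proof. by move=> n_gt2; rewrite mG_halfE ?oddX; case: n n_gt2 => [|[|[|k]]]. Qed.

Lemma odd_mG n : 1 < n -> odd (mG n) = false.
Proof. by move=> n_gt1; rewrite -addn_mG_half // addnn odd_double. Qed.

Section HalfRotation.

Variable n : nat.
Hypothesis n_ge3 : 3 <= n.

Let n_gt1 : 1 < n := ltnW n_ge3.
Let n_gt0 : 0 < n := ltnW n_gt1.

Local Notation m := (mG n).
Local Notation h := (mG n %/ 2).

Lemma inH_G i : inG n i -> inH n i = (m <= i).
Proof. by rewrite /inH /inG => ->; rewrite andbT. Qed.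

Lemma inP_G i : inG n i -> inP n i = ~~ inH n i.
Proof. by move=> Gi; rewrite inH_G // -ltnNge. Qed.

Definition of_half (b : bool) (r : nat) := r %% m + b * m.

Definition half_rot (i : nat) := of_half (inH n i) (i + h).

Definition twist (c : bool) (i : nat) := if c then half_rot i else i.

Lemma of_half_inG b r : inG n (of_half b r).
Proof.
rewrite /inG /of_half expn_mG //.
by case: b; rewrite ?mul1n ?mul0n ?addn0 ?ltn_add2r ?ltn_mod_mG // ltn_addr ?ltn_mod_mG.
Qed.

Lemma inH_of_half b r : inH n (of_half b r) = b.
Proof.
rewrite inH_G ?of_half_inG // /of_half.
by case: b; rewrite ?mul1n ?mul0n ?leq_addl // addn0 leqNgt ltn_mod_mG.
Qed.

Lemma odd_of_half b r : odd (of_half b r) = odd r.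
Proof. by rewrite /of_half oddD oddM !odd_mG // andbF addbF odd_mod ?odd_mG. Qed.

Lemma of_halfK i : inG n i -> of_half (inH n i) i = i.
Proof.
move=> Gi; rewrite inH_G // /of_half.
have [lt_im | le_mi] := ltnP i m; first by rewrite modn_small ?addn0.
move: Gi; rewrite /inG expn_mG // -(subnK le_mi) ltn_add2r => lt_im.
by rewrite modnDr modn_small ?mul1n.
Qed.

Lemma half_rot_of_half b r : half_rot (of_half b r) = of_half b (r + h).
Proof.
rewrite /half_rot inH_of_half /of_half; congr (_ + _).
by rewrite addnAC addnC modnMDl modnDml.
Qed.

Lemma half_rotK b r : half_rot (half_rot (of_half b r)) = of_half b r.
Proof. by rewrite !half_rot_of_half -addnA addn_mG_half // /of_half modnDr. Qed.

Lemma twist_inG c i : inG n i -> inG n (twist c i).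
Proof. by case: c => // _; apply: of_half_inG. Qed.

Lemma twist_twist c d i : inG n i -> twist c (twist d i) = twist (c (+) d) i.
Proof.
move=> /of_halfK <-.
by case: c d => [] []; rewrite /twist /= ?half_rotK.
Qed.

Lemma odd_twist c i : odd (twist c i) = odd i.
Proof.
by case: c => //=; rewrite /half_rot odd_of_half oddD odd_mG_half // addbF.
Qed.

Lemma Amap_twist i : inG n i -> Amap n i = twist (odd i) i.
Proof.
move=> Gi; rewrite /Amap /inOP /inOH inP_G //.
case: (odd i); rewrite ?andbF ?andbT //= /half_rot /of_half.
by case: (inH n i); rewrite ?mul1n ?mul0n ?addn0.
Qed.

Lemma gyr_twist a b i : inG n i -> gyr n a b i = twist (inM n a b && odd i) i.
Proof. by move=> Gi; rewrite /gyr; case: (inM n a b); rewrite ?Amap_twist. Qed.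

Lemma gopE a b : inG n a -> inG n b ->
  gop n a b = twist (inEH n a && odd b) (of_half (inH n a (+) inH n b) (a + b)).
Proof.
move=> Ga Gb; rewrite /gop /inEH /inOH /inOP !inP_G //.
case: (inH n a) (inH n b) (odd a) (odd b) => [] [] [] [];
  by rewrite /twist /= ?half_rot_of_half /of_half ?mul1n ?mul0n ?addn0 ?modn_mod.
Qed.

Lemma gop_inG a b : inG n a -> inG n b -> inG n (gop n a b).
Proof. by move=> Ga Gb; rewrite gopE // twist_inG ?of_half_inG. Qed.

Lemma odd_gop a b : inG n a -> inG n b -> odd (gop n a b) = odd a (+) odd b.
Proof. by move=> Ga Gb; rewrite gopE // odd_twist odd_of_half oddD. Qed.

Lemma gyrocomm_twist_bits a b : inG n a -> inG n b ->
  inEH n a && odd b = (inM n a b && (odd a (+) odd b)) (+) (inEH n b && odd a).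
Proof.
move=> Ga Gb; rewrite /inM /inOP /inOH /inEH !inP_G //.
by case: (inH n a) (inH n b) (odd a) (odd b) => [] [] [] [].
Qed.

End HalfRotation.

Theorem mainTheorem3 (n : nat) (hn : 3 <= n) (a b : nat) :
  inG n a -> inG n b ->
  gop n a b = gyr n a b (gop n b a).
Proof.
move=> Ga Gb.
rewrite gyr_twist ?gop_inG // odd_gop // !gopE // twist_twist ?of_half_inG //.
by rewrite (addnC b) (addbC (inH n b)) (addbC (odd b)) -gyrocomm_twist_bits.
Qed.
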